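(* Let $w$ be a nonnegative weight function on $\mathbb R$ with finite moments and infinite support, $w_1(t)=(1+t^2)w(t)$, and let $t_1,\dots,t_n$ and $\lambda_1,\dots,\lambda_n$ be the nodes and weights of the $n$-point Gaussian quadrature rule for $w$. Set $x_j=\sqrt{t_j^2+1}$, $y_j=t_j$, and define $$\langle f,g\rangle_n=\sum_{j=1}^n\lambda_j\big[f(x_j,y_j)g(x_j,y_j)+f(-x_j,y_j)g(-x_j,y_j)\big].$$ Then the $2n$ polynomials $Y_{k,1}(x,y)=p_k(w;y)$, $0\le k\le n-1$, and $Y_{k,2}(x,y)=x\,p_{k-1}(w_1;y)$, $1\le k\le n$, are mutually orthogonal with respect to $\langle\cdot,\cdot\rangle_n$.
   Context: $p_k(v;\cdot)$ denotes an orthogonal polynomial of degree $k$ with respect to the weight $v$ (any fixed nonzero normalization). The $n$-point Gaussian quadrature rule for $v$ is the rule $\int g\,v\approx\sum_j\lambda_jg(t_j)$ with nodes the zeros of $p_n(v)$, exact for all polynomials of degree at most $2n-1$. *)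

From Stdlib Require Import Reals Lra List.
Open Scope R_scope.

Fixpoint rsum (n : nat) (f : nat -> R) : R :=
  match n with O => 0 | S m => rsum m f + f m end.

Definition is_integral_R (f : R -> R) (l : R) : Prop :=
  (forall a b : R, exists pr : Riemann_integrable f a b, True) /\
  forall eps : R, eps > 0 -> exists M : R, forall a b : R,
    a <= - M -> M <= b -> forall pr : Riemann_integrable f a b,
      Rabs (RiemannInt pr - l) < eps.

Definition weight_finite_moments (w : R -> R) : Prop :=
  (forall t, 0 <= w t) /\
  forall k : nat, exists m : R, is_integral_R (fun t => t ^ k * w t) m.

Definition in_support (w : R -> R) (t : R) : Prop :=
  forall eps : R, eps > 0 ->
    forall pr : Riemann_integrable w (t - eps) (t + eps), RiemannInt pr > 0.

Definition infinite_support (w : R -> R) : Prop :=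
  forall l : list R, exists t, in_support w t /\ ~ In t l.

Definition poly_le (g : R -> R) (d : nat) : Prop :=
  exists c : nat -> R, forall t, g t = rsum (S d) (fun i => c i * t ^ i).

Definition orth_poly (v : R -> R) (k : nat) (p : R -> R) : Prop :=
  (exists c : nat -> R, c k <> 0 /\
     forall t, p t = rsum (S k) (fun i => c i * t ^ i)) /\
  forall (m : nat) (q : R -> R), (m < k)%nat -> poly_le q m ->
    is_integral_R (fun t => p t * q t * v t) 0.

Definition ip_n (n : nat) (t lam : nat -> R) (f g : R -> R -> R) : R :=
  rsum n (fun j =>
    let x := sqrt (t j ^ 2 + 1) in
    let y := t j in
    lam j * (f x y * g x y + f (- x) y * g (- x) y)).

(* Every node satisfies x^2 = 1 + y^2, and the two points (x, y), (-x, y) carry the same weight.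
   Hence <Y_{k,1}, Y_{l,2}>_n vanishes by oddness in x, <Y_{k,1}, Y_{l,1}>_n is twice the Gauss
   sum of p_k(w) p_l(w), and <Y_{k,2}, Y_{l,2}>_n is twice the Gauss sum of
   p_{k-1}(w_1) p_{l-1}(w_1) (1 + y^2).  All these products have degree at most 2n - 1, so the
   rule reproduces their integrals against w, which vanish by orthogonality (for w_1 the factor
   1 + y^2 is absorbed into the weight). *)
From Stdlib Require Import Reals Lra Lia FunctionalExtensionality.
Open Scope R_scope.

Lemma rsum_ext n f g : (forall i, (i < n)%nat -> f i = g i) -> rsum n f = rsum n g.
Proof.
  induction n as [|n IH]; intros H; simpl; auto.
  rewrite IH by (intros; apply H; lia). rewrite H by lia. reflexivity.
Qed.

Lemma rsum_plus n f g : rsum n (fun i => f i + g i) = rsum n f + rsum n g.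
Proof. induction n as [|n IH]; simpl; [ring | rewrite IH; ring]. Qed.

Lemma rsum_scal n a f : rsum n (fun i => a * f i) = a * rsum n f.
Proof. induction n as [|n IH]; simpl; [ring | rewrite IH; ring]. Qed.

Lemma rsum_zero n : rsum n (fun _ => 0) = 0.
Proof. induction n as [|n IH]; simpl; [ring | rewrite IH; ring]. Qed.

Lemma rsum_shift n f : rsum (S n) f = f O + rsum n (fun i => f (S i)).
Proof. induction n as [|n IH]; simpl in *; [ring | rewrite IH; ring]. Qed.

Lemma poly_le_ext f g d : poly_le f d -> (forall s, f s = g s) -> poly_le g d.
Proof. intros [c Hc] E; exists c; intros s; rewrite <- E; auto. Qed.

Lemma poly_le_S f d : poly_le f d -> poly_le f (S d).
Proof.
  intros [c Hc]. exists (fun i => if Nat.leb i d then c i else 0).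
  intros s. rewrite Hc. change (rsum (S (S d)) ?F) with (rsum (S d) F + F (S d)).
  cbv beta. rewrite (proj2 (Nat.leb_gt (S d) d)) by lia.
  rewrite Rmult_0_l, Rplus_0_r. apply rsum_ext. intros i Hi.
  rewrite (proj2 (Nat.leb_le i d)) by lia. reflexivity.
Qed.

Lemma poly_le_mono f d d' : poly_le f d -> (d <= d')%nat -> poly_le f d'.
Proof. intros H Hd. induction Hd; auto using poly_le_S. Qed.

Lemma poly_le_add f g d : poly_le f d -> poly_le g d -> poly_le (fun s => f s + g s) d.
Proof.
  intros [c Hc] [e He]. exists (fun i => c i + e i). intros s.
  rewrite Hc, He, <- rsum_plus. apply rsum_ext; intros; ring.
Qed.

Lemma poly_le_scal f a d : poly_le f d -> poly_le (fun s => a * f s) d.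
Proof.
  intros [c Hc]. exists (fun i => a * c i). intros s.
  rewrite Hc, <- rsum_scal. apply rsum_ext; intros; ring.
Qed.

Lemma poly_le_mulX f d : poly_le f d -> poly_le (fun s => s * f s) (S d).
Proof.
  intros [c Hc]. exists (fun i => match i with O => 0 | S j => c j end). intros s.
  rewrite Hc, (rsum_shift (S d)), <- rsum_scal. cbv beta.
  rewrite Rmult_0_l, Rplus_0_l. apply rsum_ext; intros; simpl; ring.
Qed.

Lemma poly_le_S_decomp f d : poly_le f (S d) ->
  exists a f', poly_le f' d /\ forall s, f s = a + s * f' s.
Proof.
  intros [c Hc]. exists (c O), (fun s => rsum (S d) (fun i => c (S i) * s ^ i)).
  split; [exists (fun i => c (S i)); reflexivity |].
  intros s. rewrite Hc, rsum_shift, <- rsum_scal. simpl pow at 1. f_equal; [ring |].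
  apply rsum_ext; intros; simpl; ring.
Qed.

Lemma poly_le_mul d e f g : poly_le f d -> poly_le g e ->
  poly_le (fun s => f s * g s) (d + e).
Proof.
  revert f. induction d as [|d IH]; intros f Hf Hg.
  - destruct Hf as [c Hc].
    apply poly_le_ext with (fun s => c O * g s); [apply poly_le_scal; auto |].
    intros s; rewrite Hc; simpl; ring.
  - destruct (poly_le_S_decomp _ _ Hf) as [a [f' [Hf' E]]].
    apply poly_le_ext with (fun s => a * g s + s * (f' s * g s)).
    + apply poly_le_add.
      * apply poly_le_mono with e; [apply poly_le_scal; auto | lia].
      * apply poly_le_mulX, IH; auto.
    + intros s; rewrite E; ring.
Qed.

Lemma poly_le_1_plus_sqr : poly_le (fun s => 1 + s ^ 2) 2.
Proof.
  exists (fun i => match i with O => 1 | 2%nat => 1 | _ => 0 end).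
  intros s; simpl; ring.
Qed.

Lemma orth_poly_poly_le v k p : orth_poly v k p -> poly_le p k.
Proof. intros [[c [_ Hc]] _]. exists c; auto. Qed.

Lemma is_integral_R_unique f l1 l2 : is_integral_R f l1 -> is_integral_R f l2 -> l1 = l2.
Proof.
  intros [Hint H1] [_ H2].
  destruct (Req_dec l1 l2) as [| Hne]; auto. exfalso.
  set (eps := Rabs (l1 - l2) / 2).
  assert (Heps : eps > 0).
  { assert (0 < Rabs (l1 - l2)) by (apply Rabs_pos_lt; lra). unfold eps; lra. }
  destruct (H1 eps Heps) as [M1 HM1], (H2 eps Heps) as [M2 HM2].
  pose proof (Rmax_l M1 M2); pose proof (Rmax_r M1 M2).
  set (M := Rmax M1 M2) in *.
  destruct (Hint (- M) M) as [pr _].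
  specialize (HM1 (- M) M ltac:(lra) ltac:(lra) pr).
  specialize (HM2 (- M) M ltac:(lra) ltac:(lra) pr).
  pose proof (Rabs_triang (RiemannInt pr - l2) (l1 - RiemannInt pr)) as T.
  replace (RiemannInt pr - l2 + (l1 - RiemannInt pr)) with (l1 - l2) in T by ring.
  rewrite (Rabs_minus_sym l1 (RiemannInt pr)) in T. unfold eps in *. lra.
Qed.

Lemma is_integral_R_ext f g l :
  (forall s, f s = g s) -> is_integral_R f l -> is_integral_R g l.
Proof. intros E; replace g with f by (apply functional_extensionality; auto); auto. Qed.

Lemma orth_poly_orthogonal v k l p q : orth_poly v k p -> orth_poly v l q -> k <> l ->
  is_integral_R (fun s => p s * q s * v s) 0.
Proof.
  intros Hp Hq Hkl. destruct (Nat.lt_gt_cases k l) as [[H | H] _]; [exact Hkl | |].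
  - apply is_integral_R_ext with (fun s => q s * p s * v s); [intros; ring |].
    apply (proj2 Hq k p H), (orth_poly_poly_le _ _ _ Hp).
  - apply (proj2 Hp l q H), (orth_poly_poly_le _ _ _ Hq).
Qed.

Lemma gauss_sum_eq_0 w n t lam g
  (hexact : forall g, poly_le g (2 * n - 1) ->
       is_integral_R (fun s => g s * w s) (rsum n (fun j => lam j * g (t j)))) :
  poly_le g (2 * n - 1) -> is_integral_R (fun s => g s * w s) 0 ->
  rsum n (fun j => lam j * g (t j)) = 0.
Proof. intros Hg H0. exact (is_integral_R_unique _ _ _ (hexact g Hg) H0). Qed.

Lemma ip_n_indep_x n t lam f g :
  ip_n n t lam (fun _ y => f y) (fun _ y => g y)
  = 2 * rsum n (fun j => lam j * (f (t j) * g (t j))).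
Proof. unfold ip_n. rewrite <- rsum_scal. apply rsum_ext; intros; ring. Qed.

Lemma ip_n_mul_x n t lam f g :
  ip_n n t lam (fun x y => x * f y) (fun x y => x * g y)
  = 2 * rsum n (fun j => lam j * (f (t j) * g (t j) * (1 + t j ^ 2))).
Proof.
  unfold ip_n. rewrite <- rsum_scal. apply rsum_ext; intros j _.
  cbv zeta. set (x := sqrt (t j ^ 2 + 1)).
  assert (Hx : x * x = 1 + t j ^ 2).
  { unfold x. rewrite sqrt_sqrt by (pose proof (pow2_ge_0 (t j)); lra). ring. }
  transitivity (2 * (lam j * (f (t j) * g (t j) * (x * x)))); [ring | now rewrite Hx].
Qed.

Lemma ip_n_odd_x n t lam f g :
  ip_n n t lam (fun _ y => f y) (fun x y => x * g y) = 0.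
Proof. unfold ip_n. rewrite <- (rsum_zero n). apply rsum_ext; intros; ring. Qed.

Theorem corollary8p12
  (w : R -> R) (n : nat) (P Q : nat -> R -> R) (t lam : nat -> R)
  (hw : weight_finite_moments w) (hsupp : infinite_support w)
  (hP : forall k, (k <= n)%nat -> orth_poly w k (P k))
  (hQ : forall k, (k < n)%nat -> orth_poly (fun s => (1 + s ^ 2) * w s) k (Q k))
  (hnodes : forall j, (j < n)%nat -> P n (t j) = 0)
  (hdistinct : forall i j, (i < n)%nat -> (j < n)%nat -> t i = t j -> i = j)
  (hexact : forall g, poly_le g (2 * n - 1) ->
       is_integral_R (fun s => g s * w s) (rsum n (fun j => lam j * g (t j)))) :
  let Y1 := fun k : nat => fun x y : R => P k y in
  let Y2 := fun k : nat => fun x y : R => x * Q (k - 1)%nat y in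
  (forall k l, (k < n)%nat -> (l < n)%nat -> k <> l -> ip_n n t lam (Y1 k) (Y1 l) = 0) /\
  (forall k l, (1 <= k <= n)%nat -> (1 <= l <= n)%nat -> k <> l ->
       ip_n n t lam (Y2 k) (Y2 l) = 0) /\
  (forall k l, (k < n)%nat -> (1 <= l <= n)%nat -> ip_n n t lam (Y1 k) (Y2 l) = 0).
Proof.
  cbv zeta. split; [| split].
  - intros k l Hk Hl Hkl.
    rewrite ip_n_indep_x, (gauss_sum_eq_0 w n t lam (fun s => P k s * P l s));
      [ring | exact hexact | |].
    + apply poly_le_mono with (k + l)%nat; [| lia].
      apply poly_le_mul; apply orth_poly_poly_le with w, hP; lia.
    + apply orth_poly_orthogonal with k l; auto using hP with arith.
  - intros k l Hk Hl Hkl.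
    rewrite ip_n_mul_x,
      (gauss_sum_eq_0 w n t lam (fun s => Q (k - 1)%nat s * Q (l - 1)%nat s * (1 + s ^ 2)));
      [ring | exact hexact | |].
    + apply poly_le_mono with (k - 1 + (l - 1) + 2)%nat; [| lia].
      apply poly_le_mul; [| exact poly_le_1_plus_sqr].
      apply poly_le_mul; eapply orth_poly_poly_le, hQ; lia.
    + apply is_integral_R_ext with
        (fun s => Q (k - 1)%nat s * Q (l - 1)%nat s * ((1 + s ^ 2) * w s)); [intros; ring |].
      apply orth_poly_orthogonal with (k - 1)%nat (l - 1)%nat; [apply hQ; lia .. | lia].
  - intros k l _ _. apply ip_n_odd_x.
Qed.
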